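(* Let $R$ be a $\star$-ring and equip the formal power series ring $R[[x]]$ with the involution $\left(\sum_{i\ge0}a_ix^i\right)^\star=\sum_{i\ge0}a_i^\star x^i$. Then $R[[x]]$ is weakly $\star$-clean if and only if $R$ is weakly $\star$-clean.
   Context: Rings are associative with identity. A $\star$-ring is a ring with a map $\star$ satisfying $(x+y)^\star=x^\star+y^\star$, $(xy)^\star=y^\star x^\star$, $(x^\star)^\star=x$. A projection is $p$ with $p^2=p=p^\star$; $P(R)$ is the set of projections, $U(R)$ the units. An element $x$ is weakly $\star$-clean if $x=u+p$ or $x=u-p$ with $u\in U(R)$, $p\in P(R)$; $R$ is weakly $\star$-clean if all its elements are. *)

From HB Require Import structures.
From mathcomp Require Import all_boot all_order all_algebra.
Set Implicit Arguments. Unset Strict Implicit. Unset Printing Implicit Defensive.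
Import GRing.Theory.
Local Open Scope ring_scope.

Definition is_star_ring (R : pzRingType) (s : R -> R) : Prop :=
  [/\ forall x y : R, s (x + y) = s x + s y,
      forall x y : R, s (x * y) = s y * s x
    & forall x : R, s (s x) = x].

Definition is_unit_op (T : Type) (mul : T -> T -> T) (one : T) (u : T) : Prop :=
  exists v, mul u v = one /\ mul v u = one.

Definition is_projection_op (T : Type) (mul : T -> T -> T) (star : T -> T)
  (p : T) : Prop := mul p p = p /\ star p = p.

Definition weakly_star_clean_elt_op (T : Type) (add mul : T -> T -> T)
  (opp : T -> T) (one : T) (star : T -> T) (x : T) : Prop :=
  exists u p, is_unit_op mul one u /\ is_projection_op mul star p /\
    (x = add u p \/ x = add u (opp p)).

Definition weakly_star_clean_op (T : Type) (add mul : T -> T -> T)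
  (opp : T -> T) (one : T) (star : T -> T) : Prop :=
  forall x : T, weakly_star_clean_elt_op add mul opp one star x.

Definition weakly_star_clean (R : pzRingType) (s : R -> R) : Prop :=
  weakly_star_clean_op (fun x y : R => x + y) (fun x y : R => x * y)
    (fun x : R => - x) (1 : R) s.

Definition fps (R : pzRingType) := nat -> R.

Definition fps_add (R : pzRingType) (f g : fps R) : fps R := fun n => f n + g n.
Definition fps_opp (R : pzRingType) (f : fps R) : fps R := fun n => - f n.
Definition fps_mul (R : pzRingType) (f g : fps R) : fps R :=
  fun n => \sum_(i < n.+1) f i * g (n - i)%N.
Definition fps_one (R : pzRingType) : fps R := fun n => if n == 0%N then 1 else 0.
Definition fps_star (R : pzRingType) (s : R -> R) (f : fps R) : fps R :=
  fun n => s (f n).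

Definition fps_weakly_star_clean (R : pzRingType) (s : R -> R) : Prop :=
  weakly_star_clean_op (@fps_add R) (@fps_mul R) (@fps_opp R) (@fps_one R)
    (fps_star s).

(** A power series is a unit exactly when its constant term is, because the
    remaining coefficients of a one-sided inverse can be solved for one at a
    time.  Taking the constant term is a ring map commuting with the star, and
    constant projections of R stay projections in R[[x]]; so f = u +/- p in
    R[[x]] gives f(0) = u(0) +/- p(0) in R, and f(0) = u +/- p in R gives
    f = (f - (+/-p)) +/- p in R[[x]], whose first summand has unit constant term. *)

From mathcomp Require Import all_boot all_order all_algebra.
From Stdlib Require Import FunctionalExtensionality.
Set Implicit Arguments. Unset Strict Implicit. Unset Printing Implicit Defensive.
Import GRing.Theory.
Local Open Scope ring_scope.

Section CourseOfValues.
Variable R : pzRingType.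
Variable F : nat -> (nat -> R) -> R.

(* [F n p] may only look at [p k] for [k < n]; [cov_seq n] lists the first
   [n.+1] values of the sequence defined by [a n = F n a]. *)
Fixpoint cov_seq (n : nat) : seq R :=
  if n is m.+1 then rcons (cov_seq m) (F m.+1 (nth 0 (cov_seq m)))
  else [:: F 0 (fun _ => 0)].

Definition cov (n : nat) : R := nth 0 (cov_seq n) n.

Lemma size_cov_seq n : size (cov_seq n) = n.+1.
Proof. by elim: n => //= n IH; rewrite size_rcons IH. Qed.

Lemma nth_cov_seq n k : (k <= n)%N -> nth 0 (cov_seq n) k = cov k.
Proof.
elim: n => [|n IH]; first by rewrite leqn0 => /eqP ->.
rewrite leq_eqVlt => /orP [/eqP -> //|]; rewrite ltnS => hk /=.
by rewrite nth_rcons size_cov_seq ltnS hk IH.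
Qed.

Hypothesis F_prefix :
  forall n (p q : nat -> R), (forall k, (k < n)%N -> p k = q k) -> F n p = F n q.

Lemma covE n : cov n = F n cov.
Proof.
case: n => [|n]; rewrite /cov /=; first exact: F_prefix.
rewrite nth_rcons size_cov_seq ltnn eqxx; apply: F_prefix => k hk.
by rewrite nth_cov_seq // -ltnS.
Qed.

End CourseOfValues.

Section FormalPowerSeries.
Variable R : pzRingType.
Implicit Types f g h : fps R.

Definition fps_C (a : R) : fps R := fun n => if n == 0%N then a else 0.

Lemma fps_mul_coef0 f g : fps_mul f g 0%N = f 0%N * g 0%N.
Proof. by rewrite /fps_mul big_ord1. Qed.

Lemma fps_mulA f g h : fps_mul (fps_mul f g) h = fps_mul f (fps_mul g h).
Proof.
apply: functional_extensionality => n; rewrite /fps_mul.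
pose t i j := f j * g (i - j)%N * h (n - i)%N.
transitivity (\sum_(i < n.+1) \sum_(j < n.+1) (if (j < i.+1)%N then t i j else 0)).
  apply: eq_bigr => i _.
  by rewrite mulr_suml (big_ord_widen _ (t i) (ltn_ord i)) big_mkcond.
rewrite exchange_big /=; apply: eq_bigr => j _.
rewrite mulr_sumr -big_mkcond /= -(big_mkord (fun i => j < i.+1)%N (t ^~ j)).
have -> : \sum_(0 <= i < n.+1 | (j < i.+1)%N) t i j = \sum_(j <= i < n.+1) t i j.
  rewrite [RHS]big_geq_mkord big_mkord.
  by apply: eq_bigl => i /=; rewrite ltnS; case: leq.
have jn : (j <= n)%N by rewrite -ltnS.
rewrite (big_addn 0 n.+1 j) (subSn jn) big_mkord; apply: eq_bigr => k _.
by rewrite /t addnK mulrA addnC subnDA.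
Qed.

Lemma fps_mul1r f : fps_mul (fps_one R) f = f.
Proof.
apply: functional_extensionality => n.
rewrite /fps_mul big_ord_recl /= subn0 mul1r.
by rewrite big1 ?addr0 // => i _; rewrite /fps_one mul0r.
Qed.

Lemma fps_mulr1 f : fps_mul f (fps_one R) = f.
Proof.
apply: functional_extensionality => n.
rewrite /fps_mul big_ord_recr /= subnn mulr1.
by rewrite big1 ?add0r // => i _; rewrite /fps_one subn_eq0 leqNgt ltn_ord mulr0.
Qed.

Lemma fps_mul_C a b : fps_mul (fps_C a) (fps_C b) = fps_C (a * b).
Proof.
apply: functional_extensionality => n.
rewrite /fps_mul big_ord_recl big1 => [|i _]; last by rewrite /fps_C mul0r.
by rewrite addr0 subn0 /fps_C; case: (n == 0%N); rewrite ?mulr0.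
Qed.

Lemma fps_star_C (s : R -> R) a : s 0 = 0 -> fps_star s (fps_C a) = fps_C (s a).
Proof.
by move=> s0; apply: functional_extensionality => n; rewrite /fps_star /fps_C; case: eqP.
Qed.

(* The coefficient of x^(m+1) in f * g is f(0) * g(m+1) + (terms in g(0..m)),
   which determines g(m+1) once f(0) has a right inverse v. *)
Lemma fps_mul_rinv f v : f 0%N * v = 1 -> exists g, fps_mul f g = fps_one R.
Proof.
move=> fv.
pose F n (p : nat -> R) :=
  if n is m.+1 then - (v * \sum_(i < m.+1) f i.+1 * p (m - i)%N) else v.
have F_prefix n (p q : nat -> R) :
    (forall k, (k < n)%N -> p k = q k) -> F n p = F n q.
  case: n => [|m] // pq /=; congr (- (v * _)); apply: eq_bigr => i _.
  by rewrite pq // ltnS leq_subr.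
exists (cov F); apply: functional_extensionality => -[|m].
  by rewrite fps_mul_coef0 (covE F_prefix).
rewrite /fps_mul /fps_one big_ord_recl /= (covE F_prefix m.+1) /=.
rewrite mulrN mulrA fv mul1r addrC; apply/eqP; rewrite subr_eq0; apply/eqP.
by apply: eq_bigr => i _; rewrite /bump /= add1n subSS.
Qed.

Lemma fps_mul_linv f v : v * f 0%N = 1 -> exists h, fps_mul h f = fps_one R.
Proof.
move=> vf.
pose F n (p : nat -> R) :=
  if n is m.+1 then - ((\sum_(i < m.+1) p i * f (m.+1 - i)%N) * v) else v.
have F_prefix n (p q : nat -> R) :
    (forall k, (k < n)%N -> p k = q k) -> F n p = F n q.
  case: n => [|m] // pq /=; congr (- (_ * v)); apply: eq_bigr => i _.
  by rewrite pq.
exists (cov F); apply: functional_extensionality => -[|m].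
  by rewrite fps_mul_coef0 (covE F_prefix).
rewrite /fps_mul /fps_one big_ord_recr /= (covE F_prefix m.+1) /=.
by rewrite subnn mulNr -mulrA vf mulr1 subrr.
Qed.

Lemma fps_unitP f :
  is_unit_op (@fps_mul R) (fps_one R) f <-> is_unit_op *%R 1 (f 0%N).
Proof.
split=> [[g [fg gf]] | [v [fv vf]]].
  by exists (g 0%N); rewrite -!fps_mul_coef0 fg gf.
have [g fg] := fps_mul_rinv fv; have [h hf] := fps_mul_linv vf.
have hg : h = g by rewrite -(fps_mulr1 h) -fg -fps_mulA hf fps_mul1r.
by exists g; rewrite -{2}hg.
Qed.

Lemma fps_projection_coef0 (s : R -> R) f :
  is_projection_op (@fps_mul R) (fps_star s) f -> is_projection_op *%R s (f 0%N).
Proof.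
by move=> [ff sf]; split; [rewrite -fps_mul_coef0 ff | rewrite -{2}sf].
Qed.

Lemma fps_projection_C (s : R -> R) p :
  s 0 = 0 -> is_projection_op *%R s p ->
  is_projection_op (@fps_mul R) (fps_star s) (fps_C p).
Proof. by move=> s0 [pp sp]; split; rewrite ?fps_star_C ?fps_mul_C ?pp ?sp. Qed.

Lemma weakly_star_clean_elt_coef0 (s : R -> R) f :
  weakly_star_clean_elt_op (@fps_add R) (@fps_mul R) (@fps_opp R) (fps_one R)
    (fps_star s) f ->
  weakly_star_clean_elt_op +%R *%R -%R 1 s (f 0%N).
Proof.
move=> [u [p [/fps_unitP u0 [/fps_projection_coef0 p0 up]]]].
by exists (u 0%N), (p 0%N); split; [|split]; last by case: up => ->; [left|right].
Qed.

Lemma fps_weakly_star_clean_elt (s : R -> R) f :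
  s 0 = 0 -> weakly_star_clean_elt_op +%R *%R -%R 1 s (f 0%N) ->
  weakly_star_clean_elt_op (@fps_add R) (@fps_mul R) (@fps_opp R) (fps_one R)
    (fps_star s) f.
Proof.
move=> s0 [u [p [uU [/(fps_projection_C s0) pP [f0|f0]]]]].
- exists (fps_add f (fps_opp (fps_C p))), (fps_C p); split; [|split=> //].
    by apply/fps_unitP; rewrite /fps_add /fps_opp /fps_C /= f0 addrK.
  by left; apply: functional_extensionality => n; rewrite /fps_add /fps_opp subrK.
- exists (fps_add f (fps_C p)), (fps_C p); split; [|split=> //].
    by apply/fps_unitP; rewrite /fps_add /fps_C /= f0 subrK.
  by right; apply: functional_extensionality => n; rewrite /fps_add /fps_opp addrK.
Qed.

End FormalPowerSeries.

Lemma star_ring0 (R : pzRingType) (s : R -> R) : is_star_ring s -> s 0 = 0.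
Proof. by move=> [sD _ _]; apply: (addrI (s 0)); rewrite -sD !addr0. Qed.

Theorem proposition4p9 (R : pzRingType) (s : R -> R) :
  is_star_ring s ->
  (fps_weakly_star_clean s <-> weakly_star_clean s).
Proof.
move=> /star_ring0 s0; split=> [clean a | clean f].
- exact: weakly_star_clean_elt_coef0 (clean (fps_C a)).
- exact: fps_weakly_star_clean_elt.
Qed.
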